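(* Let $G$ be a finite simple connected graph. Suppose that all the holes in $G$ are pairwise edge-disjoint and that $G$ has exactly one non-edge maximal clique $K$. Then a cycle $C$ in $G$ is a hole if and only if $|V(K)\cap V(C)|\le 2$.
   Context: A hole of a graph is an induced (chordless) cycle of length at least $4$. A clique is a complete subgraph; a clique $K$ is non-edge if $|V(K)|\ge 3$. Cycles have length at least $3$. *)

From mathcomp Require Import all_boot.
Set Implicit Arguments. Unset Strict Implicit. Unset Printing Implicit Defensive.

Section Graphs.
Variables (T : finType) (e : rel T).

Definition simple_graph : Prop := symmetric e /\ irreflexive e.

Definition connected_graph : Prop := forall x y : T, connect e x y.

Definition is_cycle (c : seq T) : Prop :=
  [/\ uniq c, 3 <= size c & path.cycle e c].

Definition cycle_edge (c : seq T) (x y : T) : bool :=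
  (x \in c) && (y \in c) && ((y == next c x) || (x == next c y)).

Definition is_hole (c : seq T) : Prop :=
  [/\ is_cycle c, 4 <= size c &
      forall x y, x \in c -> y \in c -> e x y -> cycle_edge c x y].

(* Two cycles are the same subgraph iff they have the same edge set
   (hence the same vertex set). *)
Definition same_cycle (c1 c2 : seq T) : Prop :=
  forall x y, cycle_edge c1 x y = cycle_edge c2 x y.

Definition holes_edge_disjoint : Prop :=
  forall c1 c2, is_hole c1 -> is_hole c2 ->
    (exists x y, cycle_edge c1 x y /\ cycle_edge c2 x y) -> same_cycle c1 c2.

Definition is_clique (K : {set T}) : Prop :=
  forall x y, x \in K -> y \in K -> x != y -> e x y.

Definition is_maximal_clique (K : {set T}) : Prop :=
  is_clique K /\ forall K' : {set T}, is_clique K' -> K \subset K' -> K' = K.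

(* A non-edge clique has at least 3 vertices. *)
Definition is_nonedge_maximal_clique (K : {set T}) : Prop :=
  is_maximal_clique K /\ 3 <= #|K|.

End Graphs.

From mathcomp Require Import all_boot.
Set Implicit Arguments. Unset Strict Implicit. Unset Printing Implicit Defensive.

(* (=>) Three vertices of K on a hole C would be pairwise adjacent in G,
   hence (C being chordless) pairwise consecutive on C; a cycle of length at
   least 4 has no such triangle of consecutive vertices (no_cycle_triangle).

   (<=) We prove that every cycle C is a hole or meets K in at least three
   vertices, by strong induction on the length of C (hole_or_meet_K).
   A triangle is a clique of size 3, so it extends to a maximal clique of size
   at least 3, which must be K (triangle_meet_K).  A longer non-hole has a
   chord xy, and splitting C along xy gives two shorter cycles through the
   edge xy that are different subgraphs (chord_split).  Since holes are
   edge-disjoint, they are not both holes, and the one that is not meets K in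
   at least three vertices by induction, hence so does C. *)

Section NextInCycle.
Variable T : eqType.

Lemma next_cat_adj (c1 c2 : seq T) u v :
  uniq (c1 ++ u :: v :: c2) -> next (c1 ++ u :: v :: c2) u = v.
Proof. by move=> U; rewrite -(next_rot (size c1) U) rot_size_cat /= eqxx. Qed.

Lemma next_rcons (s : seq T) u :
  uniq (rcons s u) -> next (rcons s u) u = head u s.
Proof.
move=> U; rewrite -(next_rotr 1 U) rotr1_rcons.
by case: s {U} => /= [|? ?]; rewrite eqxx.
Qed.

End NextInCycle.

Section CycleEdges.
Variable T : finType.
Implicit Types (c : seq T) (x y : T).

Lemma cycle_edge_sym c x y : cycle_edge c x y = cycle_edge c y x.
Proof. by rewrite /cycle_edge orbC [(x \in c) && _]andbC. Qed.

Lemma cycle_edge_rot n c x y :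
  uniq c -> cycle_edge (rot n c) x y = cycle_edge c x y.
Proof. by move=> U; rewrite /cycle_edge !mem_rot !next_rot. Qed.

Lemma cycle_edge_next c x : x \in c -> cycle_edge c x (next c x).
Proof. by move=> xc; rewrite /cycle_edge xc mem_next xc eqxx. Qed.

Lemma cycle_edge_neighbour c x y : uniq c -> cycle_edge c x y ->
  y = next c x \/ y = prev c x.
Proof.
move=> U /andP[_ /orP[/eqP|/eqP xE]]; first by left.
by right; rewrite xE prev_next.
Qed.

(* A cycle of length at least 4 contains no triangle of cycle edges: rotated
   to start at a, the neighbours of a are the second and the last vertex,
   which are not consecutive. *)
Lemma no_cycle_triangle c a b d : uniq c -> 4 <= size c -> b != d ->
  cycle_edge c a b -> cycle_edge c a d -> ~~ cycle_edge c b d.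
Proof.
move=> U size_c bd ab ad; have /andP[/andP[ac _] _] := ab.
have [i s rot_c] := rot_to ac.
move: ab ad; rewrite -!(cycle_edge_rot i _ _ U) rot_c.
have /andP[_ Us] : uniq (a :: s) by rewrite -rot_c rot_uniq.
have : 4 <= size (a :: s) by rewrite -rot_c size_rot.
case: s rot_c Us => [|h [|m t]] // rot_c Us.
case/lastP: t rot_c Us => [|t l] rot_c Us _ //.
have UD : uniq (a :: h :: m :: rcons t l) by rewrite -rot_c rot_uniq.
set D := a :: h :: m :: rcons t l in UD *.
have next_a : next D a = h by rewrite /= eqxx.
have next_h : next D h = m := next_cat_adj (c1 := [:: a]) UD.
have next_l : next D l = a := next_rcons (s := a :: h :: m :: t) UD.
have prev_a : prev D a = l by rewrite -{1}next_l prev_next.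
have neighbours z : cycle_edge D a z -> z = h \/ z = l.
  by case/(cycle_edge_neighbour UD) => ->; [left | right].
have not_hl : ~~ cycle_edge D h l.
  rewrite /cycle_edge next_h next_l; apply/negP => /andP[_ /orP[] /eqP E].
    by move: Us; rewrite E /= mem_rcons mem_head andbF.
  by move: UD; rewrite /D E /= inE eqxx.
move=> /neighbours[] Eb /neighbours[] Ed; move: bd; rewrite {}Eb {}Ed ?eqxx //.
by rewrite cycle_edge_sym.
Qed.

Lemma same_cycle_subset c1 c2 : same_cycle c1 c2 -> {subset c1 <= c2}.
Proof.
move=> same x xc1.
by have := cycle_edge_next xc1; rewrite same => /andP[/andP[]].
Qed.

End CycleEdges.

Section Chords.
Variables (T : finType) (e : rel T).
Implicit Types (C : seq T) (x y : T).

Lemma is_cycle_rot n C : is_cycle e (rot n C) <-> is_cycle e C.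
Proof. by rewrite /is_cycle rot_uniq size_rot rot_cycle. Qed.

Definition chord_subcycle C C' x y : Prop :=
  [/\ is_cycle e C', size C' < size C, {subset C' <= C} & cycle_edge C' x y].

Lemma chord_subcycle_rot n C C' x y :
  chord_subcycle (rot n C) C' x y -> chord_subcycle C C' x y.
Proof.
by case=> IC'; rewrite size_rot => lt sub; split=> // z /sub; rewrite mem_rot.
Qed.

Lemma left_arc_subcycle x y p1 p2 (D := x :: p1 ++ y :: p2) :
  is_cycle e D -> e y x -> p1 != [::] -> p2 != [::] ->
  chord_subcycle D (x :: rcons p1 y) x y.
Proof.
move=> [UD _ cycD] eyx p1n p2n.
have sub : subseq (x :: rcons p1 y) D.
  rewrite -cats1 -cat_cons (cat_subseq (subseq_refl (x :: p1))) //.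
  by rewrite /= eqxx sub0seq.
have U1 : uniq (x :: rcons p1 y) := subseq_uniq sub UD.
have path1 : path e x (rcons p1 y).
  rewrite rcons_path; move: cycD; rewrite /= rcons_cat cat_path.
  by case/andP=> -> /= /andP[->].
split.
- split=> //; first by rewrite /= size_rcons !ltnS lt0n size_eq0.
  by rewrite /= rcons_path path1 last_rcons eyx.
- rewrite /D /= size_rcons size_cat /= addnS !ltnS -{1}[size p1]addn0 ltn_add2l.
  by rewrite lt0n size_eq0.
- by move=> z /(mem_subseq sub).
- rewrite /cycle_edge (next_rcons (s := x :: p1) U1) eqxx orbT andbT.
  by rewrite mem_head inE mem_rcons mem_head orbT.
Qed.

Lemma chord_arcs_nonempty x y p1 p2 :
  uniq (x :: p1 ++ y :: p2) -> ~~ cycle_edge (x :: p1 ++ y :: p2) x y ->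
  p1 != [::] /\ p2 != [::].
Proof.
move=> UD no_edge; split.
  case: p1 UD no_edge => // _.
  by rewrite /cycle_edge /= eqxx !inE !eqxx !orbT.
case: p2 UD no_edge => // UD; rewrite cats1 -rcons_cons in UD *.
by rewrite /cycle_edge (next_rcons UD) !mem_rcons mem_head !inE !eqxx !orbT.
Qed.

(* The two arc cycles of a chord differ: a vertex strictly inside the first
   arc does not lie on the second. *)
Lemma arc_cycles_distinct x y p1 p2 :
  uniq (x :: p1 ++ y :: p2) -> p1 != [::] ->
  ~ same_cycle (x :: rcons p1 y) (y :: rcons p2 x).
Proof.
case: p1 => // a p1 UD _.
have a_C1 : a \in x :: rcons (a :: p1) y by rewrite !inE eqxx orbT.
have a_C2 : a \notin y :: rcons p2 x.
  move: UD => /= /andP[]; rewrite mem_cat negb_or inE negb_or.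
  move=> /andP[xa _] /andP[/andP[_ a_yp2] _].
  by rewrite -cats1 -cat_cons mem_cat negb_or a_yp2 inE eq_sym.
by move/same_cycle_subset/(_ a a_C1); apply/negP.
Qed.

Lemma chord_split C x y :
  symmetric e -> is_cycle e C -> x \in C -> y \in C -> x != y -> e x y ->
  ~~ cycle_edge C x y ->
  exists C1 C2, [/\ chord_subcycle C C1 x y, chord_subcycle C C2 x y
                  & ~ same_cycle C1 C2].
Proof.
move=> sym IC xC yC xy exy no_edge; have [U _ _] := IC.
case: (rot_to_arc U xC yC xy) => i p1 p2 _ _ rot_C.
have ID : is_cycle e (x :: p1 ++ y :: p2) by rewrite -rot_C; apply/is_cycle_rot.
have [UD _ _] := ID.
have no_edge' : ~~ cycle_edge (x :: p1 ++ y :: p2) x y.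
  by rewrite -rot_C cycle_edge_rot.
have [p1n p2n] := chord_arcs_nonempty UD no_edge'.
have rot_D : rot (size (x :: p1)) (x :: p1 ++ y :: p2) = y :: p2 ++ x :: p1.
  exact: (rot_size_cat (x :: p1) (y :: p2)).
have IDr : is_cycle e (y :: p2 ++ x :: p1).
  by rewrite -rot_D; apply/is_cycle_rot.
exists (x :: rcons p1 y), (y :: rcons p2 x); split.
- apply: (chord_subcycle_rot (n := i)); rewrite rot_C.
  by apply: left_arc_subcycle; rewrite // sym.
- apply: (chord_subcycle_rot (n := i)); rewrite rot_C.
  apply: (chord_subcycle_rot (n := size (x :: p1))); rewrite rot_D.
  case: (left_arc_subcycle IDr exy p2n p1n) => IC2 lt2 sub2 edge2.
  by split; rewrite // cycle_edge_sym.
- exact: arc_cycles_distinct.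
Qed.

End Chords.

(* Boolean clique predicate, so that maximal cliques can be taken with
   maxset. *)
Definition cliqueb (T : finType) (e : rel T) (A : {set T}) : bool :=
  [forall x in A, forall y in A, (x != y) ==> e x y].

Lemma cliqueP (T : finType) (e : rel T) (A : {set T}) :
  reflect (is_clique e A) (cliqueb e A).
Proof.
apply: (iffP forall_inP) => [cl x y xA yA xy | cl x xA].
  by have /forall_inP/(_ y yA)/implyP := cl x xA; apply.
by apply/forall_inP => y yA; apply/implyP; apply: cl.
Qed.

Lemma triangle_clique (T : finType) (e : rel T) (C : seq T) :
  symmetric e -> is_cycle e C -> size C = 3 -> is_clique e [set x in C].
Proof.
move=> sym [_ _]; case: C => [|a [|b [|c []]]] //= /and4P[ab bc ca _] _.
by move=> x y; rewrite !inE => /or3P[]/eqP-> /or3P[]/eqP->;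
  rewrite ?eqxx // => _; rewrite // sym.
Qed.

Section UniqueLargeClique.
Variables (T : finType) (e : rel T) (K : {set T}).
Hypothesis K_unique : forall K', is_nonedge_maximal_clique e K' <-> K' = K.
Hypotheses (e_sym : symmetric e) (e_irr : irreflexive e).
Hypothesis holes_disjoint : holes_edge_disjoint e.

Definition meet_K (C : seq T) : nat := #|[set x in K | x \in C]|.

Lemma meet_K_mono C1 C2 : {subset C1 <= C2} -> meet_K C1 <= meet_K C2.
Proof.
move=> sub; apply/subset_leq_card/subsetP => x.
by rewrite !inE => /andP[-> /sub].
Qed.

(* K is a clique, and it contains every clique with at least 3 vertices,
   since such a clique extends to a non-edge maximal clique. *)
Lemma K_clique : is_clique e K.
Proof. by have [[]] := (K_unique K).2 erefl. Qed.

Lemma clique_sub_K A : is_clique e A -> 3 <= #|A| -> A \subset K.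
Proof.
move=> clA cardA.
have [B maxB AB] := maxset_exists (introT (cliqueP e A) clA).
have clB : is_clique e B by apply/cliqueP; exact: maxsetp maxB.
suff /K_unique <- : is_nonedge_maximal_clique e B by [].
split; last exact: leq_trans cardA (subset_leq_card AB).
by split=> // K' /cliqueP clK' BK'; apply: (maxsetsup maxB).
Qed.

Lemma triangle_meet_K C : is_cycle e C -> size C = 3 -> 3 <= meet_K C.
Proof.
move=> IC size3; have [U _ _] := IC.
have card3 : #|[set x in C]| = 3 by rewrite cardsE (card_uniqP U).
have CK := clique_sub_K (triangle_clique e_sym IC size3) (eq_leq (esym card3)).
rewrite /meet_K -card3; apply/subset_leq_card/subsetP => x xC.
by rewrite !inE (subsetP CK x xC); rewrite inE in xC.
Qed.

Lemma hole_meet_K C : is_hole e C -> meet_K C <= 2.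
Proof.
move=> [[U _ _] size4 chordless]; rewrite leqNgt; apply/card_gt2P.
move=> [a [b [d [[]]]]]; rewrite !inE => /andP[aK aC] /andP[bK bC] /andP[dK dC].
move=> [ab bd da].
have edge x y :
    x \in K -> y \in K -> x \in C -> y \in C -> x != y -> cycle_edge C x y.
  by move=> xK yK xC yC xy; apply: chordless => //; apply: K_clique.
have ad_edge : cycle_edge C a d by apply: edge; rewrite // eq_sym.
have := no_cycle_triangle U size4 bd (edge _ _ aK bK aC bC ab) ad_edge.
by rewrite edge.
Qed.

Lemma hole_or_meet_K C : is_cycle e C -> is_hole e C \/ 3 <= meet_K C.
Proof.
have [n] := ubnP (size C); elim: n C => // n IH C size_lt IC.
have [U size_ge3 _] := IC.
have [size3 | size_ge4] : size C = 3 \/ 3 < size C.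
  by rewrite ltn_neqAle size_ge3 andbT eq_sym; case: eqP; [left | right].
by right; apply: triangle_meet_K.
have [chord | no_chord] :=
  boolP [exists x, exists y,
           [&& x \in C, y \in C, e x y & ~~ cycle_edge C x y]]; last first.
  left; split=> // x y xC yC exy; apply: contraNT no_chord => no_edge.
  by apply/existsP; exists x; apply/existsP; exists y; rewrite xC yC exy.
right; case/existsP: chord => x /existsP[y /and4P[xC yC exy no_edge]].
have xy : x != y by apply: contraTneq exy => ->; rewrite e_irr.
have [C1 [C2 [[IC1 lt1 sub1 edge1] [IC2 lt2 sub2 edge2] distinct]]] :=
  chord_split e_sym IC xC yC xy exy no_edge.
have [hole1 | ] := IH C1 (leq_trans lt1 size_lt) IC1; last first.
  by move/leq_trans; apply; apply: meet_K_mono.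
have [hole2 | ] := IH C2 (leq_trans lt2 size_lt) IC2; last first.
  by move/leq_trans; apply; apply: meet_K_mono.
have shared : exists u v, cycle_edge C1 u v /\ cycle_edge C2 u v by exists x, y.
by case: distinct; exact: holes_disjoint hole1 hole2 shared.
Qed.

End UniqueLargeClique.

Theorem lemma2 (T : finType) (e : rel T) (K : {set T}) :
  simple_graph e -> connected_graph e ->
  holes_edge_disjoint e ->
  (forall K' : {set T}, is_nonedge_maximal_clique e K' <-> K' = K) ->
  forall C : seq T, is_cycle e C ->
    (is_hole e C <-> #|[set x in K | x \in C]| <= 2).
Proof.
move=> [e_sym e_irr] _ holes_disjoint K_unique C IC.
split; first exact: hole_meet_K.
case: (hole_or_meet_K K_unique e_sym e_irr holes_disjoint IC) => // meet3 meet2.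
by have := leq_trans meet3 meet2.
Qed.
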